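(* Let $m\ge 1$, let $P_1\ge\dots\ge P_{2^m}>0$ and $P_1^d\ge\dots\ge P^d_{2^m}>0$, and let $N_i^e(t),N_i^d(t)$, $1\le i\le 2^m-1$, be positive integers. Let $\{i,i+1\}^e$ and $\{i,i+1\}^d$, $1\le i\le 2^m-1$, be events in a probability space such that $\Pr\{\{i,i+1\}^e\}=(P_{i+1}/P_i)^{N_i^e(t)}$ and $\Pr\{\{i,i+1\}^d\}=(P^d_{i+1}/P^d_i)^{N_i^d(t)}$ for all $i$, and such that each of the four families $\{\{2i-1,2i\}^e\}_{i=1}^{2^{m-1}}$, $\{\{2i,2i+1\}^e\}_{i=1}^{2^{m-1}-1}$, $\{\{2i-1,2i\}^d\}_{i=1}^{2^{m-1}}$, $\{\{2i,2i+1\}^d\}_{i=1}^{2^{m-1}-1}$ consists of mutually independent events. Let $W=\left(\bigcup_{i=1}^{2^m-1}\{i,i+1\}^e\right)\cup\left(\bigcup_{i=1}^{2^m-1}\{i,i+1\}^d\right)$ and $P_W=\Pr\{W\}$. Then $$P_W\le 4-\prod_{i=1}^{2^{m-1}}\left(1-\left(\tfrac{P_{2i}}{P_{2i-1}}\right)^{N^e_{2i-1}(t)}\right)-\prod_{i=1}^{2^{m-1}-1}\left(1-\left(\tfrac{P_{2i+1}}{P_{2i}}\right)^{N^e_{2i}(t)}\right)-\prod_{i=1}^{2^{m-1}}\left(1-\left(\tfrac{P^d_{2i}}{P^d_{2i-1}}\right)^{N^d_{2i-1}(t)}\right)-\prod_{i=1}^{2^{m-1}-1}\left(1-\left(\t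frac{P^d_{2i+1}}{P^d_{2i}}\right)^{N^d_{2i}(t)}\right).$$
   Context: Interpretation: for a rate-1 direct shaping code with parsing length $m$ whose dictionary is stable at time $t$ (encoder counts $n_1^e(t)>\dots>n^e_{2^m}(t)$ and decoder counts $n_1^d(t)>\dots>n^d_{2^m}(t)$), $N_i^e(t)=n_i^e(t)-n_{i+1}^e(t)$, $N_i^d(t)=n_i^d(t)-n_{i+1}^d(t)$; $\{i,i+1\}^e$ (resp. $\{i,i+1\}^d$) is the event that the encoder (resp. decoder) counts of the $i$th and $(i+1)$st words become equal at some future time; $P_i$ are the input word probabilities and $P_i^d=\sum_j\rho^{d(i,j)}(1-\rho)^{m-d(i,j)}P_j$ (with $d$ the Hamming distance, $\rho$ the BSC crossover probability) the decoder output probabilities. The paper treats recurrences between non-overlapping adjacent pairs as independent and uses the one-dimensional gambler's-ruin probabilities for each pair; these are stated as hypotheses in the claim. *)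

From HB Require Import structures.
From mathcomp Require Import all_boot all_order all_algebra.
From mathcomp Require Import all_classical all_reals all_analysis.
Set Implicit Arguments. Unset Strict Implicit. Unset Printing Implicit Defensive.
Import Order.TTheory GRing.Theory Num.Theory.
Local Open Scope classical_set_scope.
Local Open Scope ring_scope.

Definition mutually_independent {d : measure_display} {T : measurableType d}
  {R : realType} (P : probability T R) (I : set nat) (A : nat -> set T) : Prop :=
  forall s : seq nat, uniq s -> (forall j, j \in s -> I j) ->
    P (\big[setI/setT]_(j <- s) A j) = (\prod_(j <- s) P (A j))%E.

From HB Require Import structures.
From mathcomp Require Import all_boot all_order all_algebra.
From mathcomp Require Import all_classical all_reals all_analysis.
From mathcomp Require Import ring lra zify.
Import Order.TTheory GRing.Theory Num.Theory.
Local Open Scope classical_set_scope.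

(* Split the adjacent-pair events {i,i+1} of one side (encoder or decoder)
   into the odd-indexed and the even-indexed ones.  Within each class
   the events are independent, so the union of a class has probability
   1 - prod (1 - Pr{i,i+1}), computed through the complements.  The union of
   each side is covered by its two classes, and the union bound over the four
   classes gives the claim. *)

Lemma big_nat_odd_even (R : Type) (idx : R) (op : Monoid.com_law idx)
    (F : nat -> R) (M : nat) :
  \big[op/idx]_(1 <= i < 2 * M) F i =
  op (\big[op/idx]_(1 <= i < M.+1) F (2 * i).-1)
     (\big[op/idx]_(1 <= i < M) F (2 * i)).
Proof.
elim: M => [|[|M] IH]; first by rewrite !big_geq // Monoid.mul1m.
  by rewrite !big_nat1 big_geq // Monoid.mulm1.
have two_mulS : (2 * M.+2 = (2 * M.+1).+2)%N by rewrite mulnS.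
rewrite two_mulS (big_nat_recr (2 * M.+1).+1) // (big_nat_recr (2 * M.+1)) // IH.
rewrite (big_nat_recr M.+2 _ (fun i => F (2 * i).-1)) //.
rewrite (big_nat_recr M.+1 _ (fun i => F (2 * i))) // two_mulS.
rewrite -!Monoid.mulmA; congr (op _ _).
by rewrite Monoid.mulmA [RHS]Monoid.mulmC.
Qed.

Local Open Scope ring_scope.

Lemma bigsetU_nat_measurable d (T : measurableType d) (F : nat -> set T)
    (m n : nat) :
  (forall i, (m <= i < n)%N -> measurable (F i)) ->
  measurable (\big[setU/set0]_(m <= i < n) F i).
Proof.
move=> mF; rewrite big_seq; apply: bigsetU_measurable => i.
by rewrite mem_index_iota => /mF.
Qed.

Section independent_events.
Local Open Scope ereal_scope.
Context {d : measure_display} {T : measurableType d} {R : realType}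
  (P : probability T R).

Let bigsetI_seq_measurable (s : seq nat) (F : nat -> set T) :
  (forall j, j \in s -> measurable (F j)) ->
  measurable (\big[setI/setT]_(j <- s) F j).
Proof. by move=> mF; rewrite big_seq; exact: bigsetI_measurable. Qed.

Section independent_family.
Variables (I : set nat) (A : nat -> set T) (q : nat -> R).
Hypotheses (mA : forall j, I j -> measurable (A j))
  (PA : forall j, I j -> P (A j) = (q j)%:E)
  (indA : mutually_independent P I A).

Lemma indep_bigsetI_setC (s t : seq nat) :
  uniq (s ++ t) -> (forall j, j \in s ++ t -> I j) ->
  P ((\big[setI/setT]_(j <- t) A j) `&` \big[setI/setT]_(j <- s) ~` A j) =
  ((\prod_(j <- t) q j) * \prod_(j <- s) (1 - q j))%:E.
Proof.
(* Carrying [t] along lets [P (B `\` A j) = P B - P (B `&` A j)] remove one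
   complement using two instances of the induction hypothesis. *)
elim: s t => [|j s IH] t /=.
  move=> ut It; rewrite !big_nil setIT mulr1 (big_morph _ (@EFinM R) erefl) indA //.
  by apply: eq_big_seq => i it; exact/PA/It.
move=> /andP[jst ust] Ist.
have mAj : measurable (A j) by apply/mA/Ist; rewrite mem_head.
have Ist' k : k \in s ++ t -> I k by move=> kst; apply: Ist; rewrite inE kst orbT.
have perm_jst : perm_eq (s ++ j :: t) (j :: s ++ t).
  exact/permPl/(perm_catCA s [:: j] t).
set B := \big[setI/setT]_(j <- t) A j `&` \big[setI/setT]_(j <- s) ~` A j.
have mB : measurable B.
  apply: measurableI; apply: bigsetI_seq_measurable => k ks;
    [|apply: measurableC]; by apply/mA/Ist'; rewrite mem_cat ks ?orbT.
have PBAj : P (B `&` A j) = ((q j * \prod_(k <- t) q k) * \prod_(k <- s) (1 - q k))%:E.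
  have -> : B `&` A j =
      \big[setI/setT]_(k <- j :: t) A k `&` \big[setI/setT]_(k <- s) ~` A k.
    by rewrite big_cons /B setIAC; congr (_ `&` _); exact: setIC.
  rewrite IH ?big_cons ?(perm_uniq perm_jst) /= ?jst // => k.
  by rewrite (perm_mem perm_jst); exact: Ist.
have PBdiff : P (B `\` A j) = P B - P (B `&` A j).
  by apply: measureD; rewrite // ltey_eq fin_num_measure.
rewrite big_cons setICA setIC -setDE -/B PBdiff PBAj IH // -EFinB big_cons.
by congr (_%:E); ring.
Qed.

Lemma indep_bigsetU (s : seq nat) : uniq s -> (forall j, j \in s -> I j) ->
  P (\big[setU/set0]_(j <- s) A j) = (1 - \prod_(j <- s) (1 - q j))%:E.
Proof.
move=> us Is; rewrite -[X in P X]setCK setC_bigsetU probability_setC; last first.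
  by apply: bigsetI_seq_measurable => j js; exact/measurableC/mA/Is.
have := @indep_bigsetI_setC s [::]; rewrite cats0 !big_nil setTI mul1r => -> //.
Qed.

End independent_family.

Lemma indep_odd_even_bigsetU_le {E : nat -> set T} {p : nat -> R} {M : nat} :
  (forall i, (1 <= i < 2 * M)%N -> measurable (E i)) ->
  (forall i, (1 <= i < 2 * M)%N -> P (E i) = (p i)%:E) ->
  mutually_independent P [set i | (1 <= i <= M)%N] (fun i => E (2 * i)%N.-1) ->
  mutually_independent P [set i | (1 <= i < M)%N] (fun i => E (2 * i)%N) ->
  P (\big[setU/set0]_(1 <= i < (2 * M)%N) E i) <=
  (2 - \prod_(1 <= i < M.+1) (1 - p (2 * i)%N.-1)
     - \prod_(1 <= i < M) (1 - p (2 * i)%N))%:E.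
Proof.
move=> mE PE indOdd indEven.
have mOdd j : (1 <= j <= M)%N -> measurable (E (2 * j)%N.-1).
  by move=> jM; apply: mE; lia.
have mEven j : (1 <= j < M)%N -> measurable (E (2 * j)%N).
  by move=> jM; apply: mE; lia.
have POdd j : (1 <= j <= M)%N -> P (E (2 * j)%N.-1) = (p (2 * j)%N.-1)%:E.
  by move=> jM; apply: PE; lia.
have PEven j : (1 <= j < M)%N -> P (E (2 * j)%N) = (p (2 * j)%N)%:E.
  by move=> jM; apply: PE; lia.
rewrite big_nat_odd_even.
apply: (@le_trans _ _ (P (\big[setU/set0]_(1 <= i < M.+1) E (2 * i)%N.-1) +
                       P (\big[setU/set0]_(1 <= i < M) E (2 * i)%N))).
  by apply: measureU2; apply: bigsetU_nat_measurable.
have iota1P n j : j \in index_iota 1 n -> (0 < j < n)%N by rewrite mem_index_iota.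
rewrite (indep_bigsetU _ _ _ mOdd POdd indOdd _ (iota_uniq _ _) (iota1P M.+1)).
rewrite (indep_bigsetU _ _ _ mEven PEven indEven _ (iota_uniq _ _) (iota1P M)).
by rewrite -EFinD lee_fin; lra.
Qed.

End independent_events.

Theorem lemma2 (d : measure_display) (T : measurableType d) (R : realType)
  (Pr : probability T R) (m : nat)
  (Pw Pd : nat -> R) (Ne Nd : nat -> nat) (Ee Ed : nat -> set T) :
  (1 <= m)%N ->
  (forall i, (1 <= i < 2 ^ m)%N -> Pw i.+1 <= Pw i) ->
  (forall i, (1 <= i <= 2 ^ m)%N -> 0 < Pw i) ->
  (forall i, (1 <= i < 2 ^ m)%N -> Pd i.+1 <= Pd i) ->
  (forall i, (1 <= i <= 2 ^ m)%N -> 0 < Pd i) ->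
  (forall i, (1 <= i < 2 ^ m)%N -> (0 < Ne i)%N) ->
  (forall i, (1 <= i < 2 ^ m)%N -> (0 < Nd i)%N) ->
  (forall i, (1 <= i < 2 ^ m)%N -> measurable (Ee i)) ->
  (forall i, (1 <= i < 2 ^ m)%N -> measurable (Ed i)) ->
  (forall i, (1 <= i < 2 ^ m)%N ->
     Pr (Ee i) = ((Pw i.+1 / Pw i) ^+ Ne i)%:E) ->
  (forall i, (1 <= i < 2 ^ m)%N ->
     Pr (Ed i) = ((Pd i.+1 / Pd i) ^+ Nd i)%:E) ->
  mutually_independent Pr [set i | (1 <= i <= 2 ^ m.-1)%N]
    (fun i => Ee (2 * i)%N.-1) ->
  mutually_independent Pr [set i | (1 <= i < 2 ^ m.-1)%N]
    (fun i => Ee (2 * i)%N) ->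
  mutually_independent Pr [set i | (1 <= i <= 2 ^ m.-1)%N]
    (fun i => Ed (2 * i)%N.-1) ->
  mutually_independent Pr [set i | (1 <= i < 2 ^ m.-1)%N]
    (fun i => Ed (2 * i)%N) ->
  (Pr ((\big[setU/set0]_(1 <= i < 2 ^ m) Ee i)
      `|` (\big[setU/set0]_(1 <= i < 2 ^ m) Ed i)) <=
  (4 - \prod_(1 <= i < (2 ^ m.-1).+1) (1 - (Pw (2 * i)%N / Pw (2 * i)%N.-1) ^+ Ne (2 * i)%N.-1)
     - \prod_(1 <= i < 2 ^ m.-1) (1 - (Pw (2 * i)%N.+1 / Pw (2 * i)%N) ^+ Ne (2 * i)%N)
     - \prod_(1 <= i < (2 ^ m.-1).+1) (1 - (Pd (2 * i)%N / Pd (2 * i)%N.-1) ^+ Nd (2 * i)%N.-1)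
     - \prod_(1 <= i < 2 ^ m.-1) (1 - (Pd (2 * i)%N.+1 / Pd (2 * i)%N) ^+ Nd (2 * i)%N))%:E)%E.
Proof.
move=> m_gt0 _ _ _ _ _ _ mEe mEd PEe PEd indEodd indEeven indDodd indDeven.
have two_exp : (2 ^ m = 2 * 2 ^ m.-1)%N by rewrite -expnS prednK.
rewrite two_exp in mEe mEd PEe PEd *.
have /= boundE := indep_odd_even_bigsetU_le Pr mEe PEe indEodd indEeven.
have /= boundD := indep_odd_even_bigsetU_le Pr mEd PEd indDodd indDeven.
apply: le_trans (measureU2 _ _ _) _;
  [exact: bigsetU_nat_measurable mEe | exact: bigsetU_nat_measurable mEd |].
apply: le_trans (leeD boundE boundD) _; rewrite -EFinD lee_fin.
have odd_shift (w : nat -> R) (n : nat -> nat) :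
    \prod_(1 <= i < (2 ^ m.-1).+1)
      (1 - (w (2 * i)%N.-1.+1 / w (2 * i)%N.-1) ^+ n (2 * i)%N.-1) =
    \prod_(1 <= i < (2 ^ m.-1).+1)
      (1 - (w (2 * i)%N / w (2 * i)%N.-1) ^+ n (2 * i)%N.-1).
  by apply: eq_big_nat => i /andP[i_gt0 _]; rewrite prednK // muln_gt0.
by rewrite !odd_shift; lra.
Qed.
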